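(* Let $\alpha,\beta>0$, $f$ as in the context, and $\zeta,\xi:\mathbb{R}_+\to\mathbb{R}$ continuous. Let $(\underline{\mathbf{W}},\underline{\mathbf{Q}})$ and $(\overline{\mathbf{W}},\overline{\mathbf{Q}})$, with all components in $\mathscr{C}^1([0,+\infty),\mathbb{R})$, be respectively a subsolution and a supersolution of the asymptotic system for $t>0$ and integers $j\in[\zeta(t),\xi(t)]$, i.e. for such $t,j$: $$\overline{W}_j'\ge-2\alpha\overline{W}_j+\beta(\overline{Q}_j+\overline{Q}_{j+1}),\quad \overline{Q}_j'\ge f(\overline{Q}_j)+\alpha(\overline{W}_j+\overline{W}_{j-1})-2\beta\overline{Q}_j,$$ and the same with all inequalities reversed for $(\underline{\mathbf{W}},\underline{\mathbf{Q}})$. Assume $\underline{W}_j(0)\le\overline{W}_j(0)$ and $\underline{Q}_j(0)\le\overline{Q}_j(0)$ for all integers $\zeta(0)-1\le j\le\xi(0)+1$, and $\underline{W}_j(t)\le\overline{W}_j(t)$, $\underline{Q}_j(t)\le\overline{Q}_j(t)$ for all $t>0$ and integers $j\in[\zeta(t)-1,\zeta(t))\cup(\xi(t),\xi(t)+1]$. Then $\underline{W}_j(t)\le\overline{W}_j(t)$ and $\underline{Q}_j(t)\le\overline{Q}_j(t)$ for all $t>0$ and integers $\zeta(t)\le j\le\xi(t)$.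
   Context: $f\in\mathscr{C}^1([0,1])$ satisfies $f(0)=f(1)=0$ and $0<f(u)\le f'(0)u$ for $u\in(0,1)$, extended to a locally Lipschitz function on $\mathbb{R}$ negative on $\mathbb{R}\setminus[0,1]$. *)

From Stdlib Require Import Reals ZArith Lra.
From Coquelicot Require Import Coquelicot.
Open Scope R_scope.

(* u is C^1 on the closed set S (one-sided difference quotients at
   boundary points): there is u' continuous on S (within S) such that the
   difference quotient of u at every t in S, taken along S, tends to u' t. *)
Definition C1_on (S : R -> Prop) (u : R -> R) : Prop :=
  exists u' : R -> R,
    (forall t, S t ->
       filterlim (fun s => (u s - u t) / (s - t))
         (within (fun s => S s /\ s <> t) (locally t)) (locally (u' t))) /\
    (forall t, S t -> filterlim u' (within S (locally t)) (locally (u' t))).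

Definition nonneg_half (t : R) : Prop := 0 <= t.
Definition unit_interval (t : R) : Prop := 0 <= t <= 1.

Definition cont_nonneg (u : R -> R) : Prop :=
  forall t, 0 <= t -> filterlim u (within nonneg_half (locally t)) (locally (u t)).

Definition locally_lipschitz (f : R -> R) : Prop :=
  forall a b : R, exists L : R, forall x y : R,
    a <= x <= b -> a <= y <= b -> Rabs (f x - f y) <= L * Rabs (x - y).

Definition right_deriv0 (f : R -> R) (d : R) : Prop :=
  filterlim (fun s => (f s - f 0) / s) (at_right 0) (locally d).

Definition KPP_f (f : R -> R) : Prop :=
  C1_on unit_interval f /\ f 0 = 0 /\ f 1 = 0 /\
  (exists fp0 : R, right_deriv0 f fp0 /\
     forall u, 0 < u < 1 -> 0 < f u /\ f u <= fp0 * u) /\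
  locally_lipschitz f /\
  (forall u, (u < 0 \/ 1 < u) -> f u < 0).

(* A comparison argument with a first touching time.  Fix a horizon T.  On [0, T]
   only finitely many sites j are involved, the Q-components there are bounded by
   some M, and f is L-Lipschitz on [-M, M].  Perturb the differences
   super - sub by eps e^(lam t) with lam > |L| + 2 alpha + 2 beta.  The perturbed
   gaps are positive at t = 0 and on the boundary layers, and their positivity on
   the window zeta t - 1 <= j <= xi t + 1 propagates along [0, T] by real
   induction: it is an open condition because the window moves continuously, and
   a closed one because at a first time where an interior gap vanishes, the
   differential inequalities and the nonnegativity of the neighbouring gaps give
   this gap a positive derivative, although it decreases to 0 from the left.
   Letting eps go to 0 yields the comparison. *)

From Stdlib Require Import Reals ZArith Lra Lia Classical.
From Coquelicot Require Import Coquelicot.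
Open Scope R_scope.

Lemma filter_forall_Zrange {T : Type} (F : (T -> Prop) -> Prop) {FF : Filter F}
  (P : Z -> T -> Prop) (a b : Z) :
  (forall j, (a <= j <= b)%Z -> F (P j)) ->
  F (fun x => forall j, (a <= j <= b)%Z -> P j x).
Proof.
  intros HP.
  assert (Hprefix : forall n : nat, (a + Z.of_nat n <= b + 1)%Z ->
            F (fun x => forall j, (a <= j < a + Z.of_nat n)%Z -> P j x)).
  { induction n as [|n IH]; intros Hn.
    - apply filter_forall; intros x j Hj; lia.
    - apply filter_imp with
        (fun x => (forall j, (a <= j < a + Z.of_nat n)%Z -> P j x) /\ P (a + Z.of_nat n)%Z x).
      + intros x [Hlt Hlast] j Hj.
        destruct (Z.eq_dec j (a + Z.of_nat n)) as [->|Hne]; [exact Hlast|].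
        apply Hlt; lia.
      + apply filter_and; [apply IH; lia|apply HP; lia]. }
  destruct (Z_lt_le_dec b a) as [Hba|Hab].
  - apply filter_forall; intros x j Hj; lia.
  - apply filter_imp with
      (fun x => forall j, (a <= j < a + Z.of_nat (Z.to_nat (b + 1 - a)))%Z -> P j x).
    + intros x H j Hj; apply H; lia.
    + apply Hprefix; lia.
Qed.

Lemma real_induction (P : R -> Prop) (a b : R) :
  a <= b -> P a ->
  (forall s, a < s <= b -> (forall t, a <= t < s -> P t) -> P s) ->
  (forall s, a <= s < b -> P s ->
     exists d, 0 < d /\ forall t, s < t < s + d -> t <= b -> P t) ->
  forall t, a <= t <= b -> P t.
Proof.
  intros Hab Ha Hclosed Hopen.
  set (A := fun s => a <= s <= b /\ forall t, a <= t <= s -> P t).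
  destruct (completeness A) as [s [Hub Hlub]].
  { exists b; intros x [Hx _]; lra. }
  { exists a; split; [lra|]; intros t Ht; replace t with a by lra; exact Ha. }
  assert (Has : a <= s).
  { apply Hub; split; [lra|]; intros t Ht; replace t with a by lra; exact Ha. }
  assert (Hsb : s <= b) by (apply Hlub; intros x [Hx _]; lra).
  assert (Hbelow : forall t, a <= t < s -> P t).
  { intros t Ht.
    assert (Hnot_ub : ~ is_upper_bound A t) by (intro H; specialize (Hlub t H); lra).
    destruct (not_all_ex_not _ _ Hnot_ub) as [x Hx].
    apply imply_to_and in Hx as [[_ HAx] Htx].
    apply HAx; lra. }
  assert (HPs : P s).
  { destruct (Req_dec s a) as [->|Hne]; [exact Ha|].
    apply Hclosed; [lra|exact Hbelow]. }
  assert (HAs : forall t, a <= t <= s -> P t).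
  { intros t Ht; destruct (Req_dec t s) as [->|]; [exact HPs|apply Hbelow; lra]. }
  destruct (Rlt_le_dec s b) as [Hlt|Hge].
  - exfalso.
    destruct (Hopen s (conj Has Hlt) HPs) as [d [Hd Hnear]].
    set (s' := Rmin (s + d / 2) b).
    assert (Hs' : s < s' <= b) by (unfold s'; split; [apply Rmin_glb_lt|apply Rmin_r]; lra).
    assert (Hs'd : s' <= s + d / 2) by apply Rmin_l.
    enough (s' <= s) by lra.
    apply Hub; split; [lra|].
    intros t Ht; destruct (Rle_lt_dec t s); [apply HAs; lra|apply Hnear; lra].
  - intros t Ht; apply HAs; lra.
Qed.

Lemma within_nonneg_locally (P : R -> Prop) (s : R) :
  0 < s -> within nonneg_half (locally s) P -> locally s P.
Proof.
  intros Hs H; unfold within in H.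
  apply (filter_imp (fun t => (nonneg_half t -> P t) /\ 0 < t)).
  - intros t [Ht Hpos]; apply Ht; unfold nonneg_half; lra.
  - exact (filter_and _ _ H (open_gt 0 s Hs)).
Qed.

Lemma layer_cases (a b x : R) :
  a - 1 <= x <= b + 1 -> (a - 1 <= x < a \/ b < x <= b + 1) \/ a <= x <= b.
Proof. intros Hx; destruct (Rlt_le_dec x a); destruct (Rlt_le_dec b x); lra. Qed.

Lemma Rle_of_forall_pos_perturbation (x y c : R) :
  0 < c -> (forall eps, 0 < eps -> 0 < x - y + eps * c) -> y <= x.
Proof.
  intros Hc H; apply Rnot_lt_le; intro Hxy.
  specialize (H ((y - x) / (2 * c)) ltac:(apply Rdiv_lt_0_compat; lra)).
  replace ((y - x) / (2 * c) * c) with ((y - x) / 2) in H by (field; lra); lra.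
Qed.

Lemma C1_on_nonneg_cont (u : R -> R) : C1_on nonneg_half u -> cont_nonneg u.
Proof.
  intros [u' [Hq _]] t Ht.
  apply filterlim_locally; intros eps.
  set (c := Rabs (u' t) + 1).
  assert (Hc : 0 < c) by (pose proof (Rabs_pos (u' t)); unfold c; lra).
  assert (Hec : 0 < eps / c) by (apply Rdiv_lt_0_compat; [apply cond_pos|exact Hc]).
  assert (Hquot := Hq t Ht _ (locally_ball (u' t) (mkposreal 1 Rlt_0_1))).
  assert (Hnear := locally_ball t (mkposreal _ Hec)).
  unfold filtermap, within in Hquot |- *.
  refine (filter_imp _ _ _ (filter_and _ _ Hquot Hnear)).
  intros s [Hqs Hst] Hs; simpl in Hqs, Hst |- *.
  change (Rabs (u s - u t) < eps); change (Rabs (s - t) < eps / c) in Hst.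
  destruct (Req_dec s t) as [->|Hne].
  { unfold Rminus; rewrite Rplus_opp_r, Rabs_R0; apply cond_pos. }
  specialize (Hqs (conj Hs Hne)); change (Rabs ((u s - u t) / (s - t) - u' t) < 1) in Hqs.
  assert (Hbound : Rabs ((u s - u t) / (s - t)) <= c).
  { pose proof (Rabs_triang_inv ((u s - u t) / (s - t)) (u' t)); unfold c; lra. }
  replace (u s - u t) with ((u s - u t) / (s - t) * (s - t)) by (field; lra).
  rewrite Rabs_mult.
  apply Rle_lt_trans with (c * Rabs (s - t)).
  { apply Rmult_le_compat_r; [apply Rabs_pos|exact Hbound]. }
  replace (pos eps) with (c * (eps / c)) by (field; lra).
  apply Rmult_lt_compat_l; assumption.
Qed.

Lemma C1_on_nonneg_is_derive (u : R -> R) (t : R) :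
  C1_on nonneg_half u -> 0 < t -> is_derive u t (Derive u t).
Proof.
  intros [u' [Hq _]] Ht.
  enough (Hd : is_derive u t (u' t)) by (rewrite (is_derive_unique _ _ _ Hd); exact Hd).
  apply is_derive_Reals; intros eps Heps.
  assert (Hquot := Hq t (Rlt_le _ _ Ht) _ (locally_ball (u' t) (mkposreal eps Heps))).
  unfold filtermap, within in Hquot.
  destruct (filter_and _ _ Hquot (open_gt 0 t Ht)) as [d Hd].
  exists d; intros h Hh Hhd.
  assert (Hball : ball t d (t + h)).
  { change (Rabs (t + h - t) < d); replace (t + h - t) with h by ring; exact Hhd. }
  destruct (Hd _ Hball) as [Hdq Hpos].
  assert (Hne : t + h <> t) by (intro E; apply Hh; lra).
  specialize (Hdq (conj (Rlt_le _ _ Hpos) Hne)).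
  change (Rabs ((u (t + h) - u t) / (t + h - t) - u' t) < eps) in Hdq.
  replace (t + h - t) with h in Hdq by ring; exact Hdq.
Qed.

Lemma cont_nonneg_bounded (u : R -> R) (T : R) :
  cont_nonneg u -> 0 <= T -> exists M, forall t, 0 <= t <= T -> Rabs (u t) <= M.
Proof.
  intros Hu HT.
  set (h := fun s => Rabs (u (Rabs s))).
  destruct (continuity_ab_maj h 0 T HT) as [c [Hc _]].
  { intros c Hc0; apply continuity_pt_filterlim.
    apply (continuous_Rabs_comp (fun s => u (Rabs s))).
    unfold continuous; rewrite (Rabs_pos_eq c) by lra.
    apply filterlim_comp with (within nonneg_half (locally c)); [|apply Hu; lra].
    pose proof (continuous_Rabs c) as HR; unfold continuous in HR.
    rewrite (Rabs_pos_eq c) in HR by lra.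
    intros P HP; exact (filter_imp _ _ (fun s H => H (Rabs_pos s)) (HR _ HP)). }
  exists (h c); intros t Ht.
  specialize (Hc t Ht); unfold h in Hc; rewrite (Rabs_pos_eq t) in Hc by lra; exact Hc.
Qed.

Definition gap (u v : R -> R) (eps lam t : R) : R := u t - v t + eps * exp (lam * t).

Lemma cont_nonneg_gap (u v : R -> R) (eps lam : R) :
  cont_nonneg u -> cont_nonneg v -> cont_nonneg (gap u v eps lam).
Proof.
  intros Hu Hv t Ht; unfold gap.
  apply (filterlim_comp_2 (G := locally (u t - v t)) (H := locally (eps * exp (lam * t)))
           (fun s => u s - v s) (fun s => eps * exp (lam * s)) Rplus).
  - apply (filterlim_comp_2 (G := locally (u t)) (H := locally (- v t)) u (fun s => - v s) Rplus
             (Hu t Ht)).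
    + exact (filterlim_comp _ _ _ v Ropp _ _ _ (Hv t Ht)
               (filterlim_opp (K := R_AbsRing) (V := R_NormedModule) (v t))).
    + exact (filterlim_plus (K := R_AbsRing) (V := R_NormedModule) (u t) (- v t)).
  - assert (Hexp : continuous (fun s => eps * exp (lam * s)) t).
    { apply (ex_derive_continuous (K := R_AbsRing) (V := R_NormedModule)); auto_derive; exact I. }
    intros P HP; unfold filtermap, within.
    apply (filter_imp (fun s => P (eps * exp (lam * s)))); [auto|exact (Hexp P HP)].
  - exact (filterlim_plus (K := R_AbsRing) (V := R_NormedModule)
             (u t - v t) (eps * exp (lam * t))).
Qed.

Lemma is_derive_gap (u v : R -> R) (eps lam t du dv : R) :
  is_derive u t du -> is_derive v t dv ->
  is_derive (gap u v eps lam) t (du - dv + eps * (lam * exp (lam * t))).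
Proof.
  intros Hu Hv.
  apply (is_derive_plus (fun s => u s - v s) (fun s => eps * exp (lam * s)));
    [exact (is_derive_minus _ _ _ _ _ Hu Hv)|].
  auto_derive; [exact I|ring].
Qed.

Lemma nonneg_of_at_left_pos (g : R -> R) (s : R) :
  continuous g s -> at_left s (fun t => 0 < g t) -> 0 <= g s.
Proof.
  intros Hg Hleft; apply Rnot_lt_le; intro Hneg.
  assert (Hnear : at_left s (fun t => g t < 0)).
  { unfold at_left, within.
    apply (filter_imp (fun t => g t < 0)); [auto|exact (Hg _ (open_lt 0 (g s) Hneg))]. }
  destruct (filter_ex _ (filter_and _ _ Hleft Hnear)) as [t [H1 H2]]; lra.
Qed.

Lemma derive_nonpos_of_at_left_pos (g : R -> R) (s l : R) :
  is_derive g s l -> at_left s (fun t => 0 < g t) -> g s = 0 -> l <= 0.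
Proof.
  intros Hd Hleft Hgs; apply Rnot_lt_le; intro Hl.
  apply is_derive_Reals in Hd; destruct (Hd l Hl) as [d Hquot].
  destruct Hleft as [e He].
  set (h := - Rmin d e / 2).
  assert (Hmin : 0 < Rmin d e) by (apply Rmin_pos; apply cond_pos).
  pose proof (Rmin_l d e); pose proof (Rmin_r d e).
  assert (Hh : h < 0) by (unfold h; lra).
  assert (Habs : Rabs h < Rmin d e) by (rewrite Rabs_left by lra; unfold h; lra).
  assert (Hpos : 0 < g (s + h)).
  { apply He; [|lra]. change (Rabs (s + h - s) < e). replace (s + h - s) with h by ring; lra. }
  specialize (Hquot h ltac:(lra) ltac:(lra)).
  rewrite Hgs, Rminus_0_r in Hquot; apply Rabs_def2 in Hquot as [_ Hq].
  assert (g (s + h) / h < 0) by (apply Rdiv_pos_neg; lra).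
  lra.
Qed.

Lemma gap_pos_of_le (u v : R -> R) (eps lam t : R) :
  v t <= u t -> 0 < eps -> 0 < gap u v eps lam t.
Proof.
  intros Huv Heps; unfold gap.
  pose proof (Rmult_lt_0_compat _ _ Heps (exp_pos (lam * t))); lra.
Qed.

Lemma C1_on_nonneg_is_derive_gap (u v : R -> R) (eps lam t : R) :
  C1_on nonneg_half u -> C1_on nonneg_half v -> 0 < t ->
  is_derive (gap u v eps lam) t (Derive u t - Derive v t + eps * (lam * exp (lam * t))).
Proof.
  intros Hu Hv Ht.
  exact (is_derive_gap _ _ _ _ _ _ _
           (C1_on_nonneg_is_derive _ _ Hu Ht) (C1_on_nonneg_is_derive _ _ Hv Ht)).
Qed.

Section Comparison.

Variables (alpha beta : R) (f zeta xi : R -> R) (Wl Ql Wu Qu : Z -> R -> R).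

Hypothesis alpha_ge0 : 0 <= alpha.
Hypothesis beta_ge0 : 0 <= beta.
Hypothesis f_loc_lip : locally_lipschitz f.
Hypothesis zeta_cont : cont_nonneg zeta.
Hypothesis xi_cont : cont_nonneg xi.
Hypothesis Wl_C1 : forall j, C1_on nonneg_half (Wl j).
Hypothesis Ql_C1 : forall j, C1_on nonneg_half (Ql j).
Hypothesis Wu_C1 : forall j, C1_on nonneg_half (Wu j).
Hypothesis Qu_C1 : forall j, C1_on nonneg_half (Qu j).
Hypothesis super : forall t (j : Z), 0 < t -> zeta t <= IZR j <= xi t ->
  Derive (Wu j) t >= - 2 * alpha * Wu j t + beta * (Qu j t + Qu (j + 1)%Z t) /\
  Derive (Qu j) t >= f (Qu j t) + alpha * (Wu j t + Wu (j - 1)%Z t) - 2 * beta * Qu j t.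
Hypothesis sub : forall t (j : Z), 0 < t -> zeta t <= IZR j <= xi t ->
  Derive (Wl j) t <= - 2 * alpha * Wl j t + beta * (Ql j t + Ql (j + 1)%Z t) /\
  Derive (Ql j) t <= f (Ql j t) + alpha * (Wl j t + Wl (j - 1)%Z t) - 2 * beta * Ql j t.
Hypothesis init_ordered : forall j : Z, zeta 0 - 1 <= IZR j <= xi 0 + 1 ->
  Wl j 0 <= Wu j 0 /\ Ql j 0 <= Qu j 0.
Hypothesis layer_ordered : forall t (j : Z), 0 < t ->
  (zeta t - 1 <= IZR j < zeta t \/ xi t < IZR j <= xi t + 1) ->
  Wl j t <= Wu j t /\ Ql j t <= Qu j t.

Lemma window_near (s : R) : 0 <= s -> within nonneg_half (locally s)
  (fun t => zeta s - 1 < zeta t < zeta s + 1 /\ xi s - 1 < xi t < xi s + 1).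
Proof.
  intros Hs.
  apply (filter_imp (fun t => Rabs (zeta t - zeta s) < 1 /\ Rabs (xi t - xi s) < 1)).
  - intros t [Hz Hx]; apply Rabs_def2 in Hz, Hx; lra.
  - apply filter_and.
    + exact (zeta_cont s Hs _ (locally_ball (zeta s) (mkposreal 1 Rlt_0_1))).
    + exact (xi_cont s Hs _ (locally_ball (xi s) (mkposreal 1 Rlt_0_1))).
Qed.

Lemma index_range_bounded (T : R) : 0 <= T -> exists N : Z, forall t (j : Z),
  0 <= t <= T -> zeta t - 1 <= IZR j <= xi t + 1 -> (- N <= j <= N)%Z.
Proof.
  intros HT.
  destruct (cont_nonneg_bounded zeta T zeta_cont HT) as [Mz HMz].
  destruct (cont_nonneg_bounded xi T xi_cont HT) as [Mx HMx].
  assert (HMz0 : 0 <= Mz) by (eapply Rle_trans; [apply Rabs_pos|apply (HMz 0); lra]).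
  assert (HMx0 : 0 <= Mx) by (eapply Rle_trans; [apply Rabs_pos|apply (HMx 0); lra]).
  exists (up (Mz + Mx + 1)); intros t j Ht Hj.
  destruct (archimed (Mz + Mx + 1)) as [Hup _].
  destruct (proj1 (Rabs_le_between _ _) (HMz t Ht)) as [Hz _].
  destruct (proj1 (Rabs_le_between _ _) (HMx t Ht)) as [_ Hx].
  split; [apply Z.lt_le_incl, lt_IZR; rewrite opp_IZR|apply Z.lt_le_incl, lt_IZR]; lra.
Qed.

Lemma Q_bounded (T : R) : 0 <= T -> exists M, forall t (j : Z),
  0 <= t <= T -> zeta t <= IZR j <= xi t -> Rabs (Qu j t) <= M /\ Rabs (Ql j t) <= M.
Proof.
  intros HT.
  destruct (index_range_bounded T HT) as [N HN].
  assert (Hev : forall j, (- N <= j <= N)%Z -> Rbar_locally p_infty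
            (fun m => forall t, 0 <= t <= T -> Rabs (Qu j t) <= m /\ Rabs (Ql j t) <= m)).
  { intros j _.
    destruct (cont_nonneg_bounded _ T (C1_on_nonneg_cont _ (Qu_C1 j)) HT) as [Mu HMu].
    destruct (cont_nonneg_bounded _ T (C1_on_nonneg_cont _ (Ql_C1 j)) HT) as [Ml HMl].
    exists (Rmax Mu Ml); intros m Hm t Ht.
    pose proof (HMu t Ht); pose proof (HMl t Ht).
    pose proof (Rmax_l Mu Ml); pose proof (Rmax_r Mu Ml); split; lra. }
  destruct (filter_forall_Zrange _ _ _ _ Hev) as [M HM].
  exists (M + 1); intros t j Ht Hj.
  apply (HM (M + 1)); [lra|apply (HN t); lra|exact Ht].
Qed.

Definition gaps_pos (eps lam t : R) : Prop :=
  forall j : Z, zeta t - 1 <= IZR j <= xi t + 1 ->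
    0 < gap (Wu j) (Wl j) eps lam t /\ 0 < gap (Qu j) (Ql j) eps lam t.

Lemma gaps_pos_init (eps lam : R) : 0 < eps -> gaps_pos eps lam 0.
Proof.
  intros Heps j Hj; destruct (init_ordered j Hj); split; apply gap_pos_of_le; assumption.
Qed.

Lemma gaps_pos_of_interior (eps lam t : R) : 0 < eps -> 0 < t ->
  (forall j : Z, zeta t <= IZR j <= xi t ->
     0 < gap (Wu j) (Wl j) eps lam t /\ 0 < gap (Qu j) (Ql j) eps lam t) ->
  gaps_pos eps lam t.
Proof.
  intros Heps Ht Hint j Hj.
  destruct (layer_cases _ _ _ Hj) as [Hlayer|Hj']; [|exact (Hint j Hj')].
  destruct (layer_ordered t j Ht Hlayer); split; apply gap_pos_of_le; assumption.
Qed.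

Lemma gaps_pos_at_left (eps lam s : R) (j : Z) : 0 < s ->
  (forall t, 0 <= t < s -> gaps_pos eps lam t) -> zeta s <= IZR j <= xi s ->
  at_left s (fun t => 0 < gap (Wu j) (Wl j) eps lam t /\ 0 < gap (Qu j) (Ql j) eps lam t).
Proof.
  intros Hs Hbefore Hj.
  assert (Hw := within_nonneg_locally _ _ Hs (window_near s (Rlt_le _ _ Hs))).
  unfold at_left, within.
  refine (filter_imp _ _ _ (filter_and _ _ Hw (open_gt 0 s Hs))).
  intros t [[Hz Hx] Ht] Hts; apply (Hbefore t); lra.
Qed.

Lemma gaps_nonneg_of_before (eps lam s : R) (j : Z) : 0 < eps -> 0 < s ->
  (forall t, 0 <= t < s -> gaps_pos eps lam t) -> zeta s - 1 <= IZR j <= xi s + 1 ->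
  0 <= gap (Wu j) (Wl j) eps lam s /\ 0 <= gap (Qu j) (Ql j) eps lam s.
Proof.
  intros Heps Hs Hbefore Hj.
  destruct (layer_cases _ _ _ Hj) as [Hlayer|Hint].
  - destruct (layer_ordered s j Hs Hlayer).
    split; apply Rlt_le, gap_pos_of_le; assumption.
  - assert (Hcont : forall u v, C1_on nonneg_half u -> C1_on nonneg_half v ->
              continuous (gap u v eps lam) s).
    { intros u v Hu Hv.
      exact (ex_derive_continuous _ _
               (ex_intro _ _ (C1_on_nonneg_is_derive_gap _ _ eps lam _ Hu Hv Hs))). }
    pose proof (gaps_pos_at_left eps lam s j Hs Hbefore Hint) as Hleft.
    split; apply nonneg_of_at_left_pos; auto.
    + exact (filter_imp _ _ (fun t H => proj1 H) Hleft).
    + exact (filter_imp _ _ (fun t H => proj2 H) Hleft).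
Qed.

Section Perturbation.

Variables (T M L eps lam : R).

Hypothesis Q_bound : forall t (j : Z), 0 <= t <= T -> zeta t <= IZR j <= xi t ->
  Rabs (Qu j t) <= M /\ Rabs (Ql j t) <= M.
Hypothesis f_lip : forall x y, - M <= x <= M -> - M <= y <= M ->
  Rabs (f x - f y) <= L * Rabs (x - y).
Hypothesis eps_pos : 0 < eps.
Hypothesis lam_large : Rabs L + 2 * alpha + 2 * beta < lam.

Local Notation DW j := (gap (Wu j) (Wl j) eps lam).
Local Notation DQ j := (gap (Qu j) (Ql j) eps lam).

Lemma gapW_derive_pos (j : Z) (s : R) : 0 < s -> zeta s <= IZR j <= xi s ->
  DW j s = 0 -> 0 <= DQ j s -> 0 <= DQ (j + 1)%Z s ->
  0 < Derive (Wu j) s - Derive (Wl j) s + eps * (lam * exp (lam * s)).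
Proof.
  intros Hs Hj HW HQ HQ1.
  destruct (super s j Hs Hj) as [HWu _]; destruct (sub s j Hs Hj) as [HWl _].
  set (E := eps * exp (lam * s)) in *.
  assert (HE : 0 < E) by exact (Rmult_lt_0_compat _ _ eps_pos (exp_pos _)).
  unfold gap in HW, HQ, HQ1; fold E in HW, HQ, HQ1.
  assert (alpha * (Wu j s - Wl j s + E) = 0) by (rewrite HW; ring).
  assert (0 <= beta * (Qu j s - Ql j s + E)) by (apply Rmult_le_pos; lra).
  assert (0 <= beta * (Qu (j + 1)%Z s - Ql (j + 1)%Z s + E)) by (apply Rmult_le_pos; lra).
  assert (0 < (lam + 2 * alpha - 2 * beta) * E)
    by (apply Rmult_lt_0_compat; [pose proof (Rabs_pos L); lra|exact HE]).
  replace (eps * (lam * exp (lam * s))) with (lam * E) by (unfold E; ring).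
  lra.
Qed.

Lemma gapQ_derive_pos (j : Z) (s : R) : 0 < s <= T -> zeta s <= IZR j <= xi s ->
  DQ j s = 0 -> 0 <= DW j s -> 0 <= DW (j - 1)%Z s ->
  0 < Derive (Qu j) s - Derive (Ql j) s + eps * (lam * exp (lam * s)).
Proof.
  intros Hs Hj HQ HW HW1.
  destruct (super s j (proj1 Hs) Hj) as [_ HQu]; destruct (sub s j (proj1 Hs) Hj) as [_ HQl].
  set (E := eps * exp (lam * s)) in *.
  assert (HE : 0 < E) by exact (Rmult_lt_0_compat _ _ eps_pos (exp_pos _)).
  unfold gap in HQ, HW, HW1; fold E in HQ, HW, HW1.
  assert (Hf : - (L * E) <= f (Qu j s) - f (Ql j s)).
  { destruct (Q_bound s j (conj (Rlt_le _ _ (proj1 Hs)) (proj2 Hs)) Hj) as [Bu Bl].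
    apply Rabs_le_between in Bu, Bl.
    pose proof (f_lip _ _ Bu Bl) as Hlip.
    replace (Qu j s - Ql j s) with (- E) in Hlip by lra.
    rewrite Rabs_Ropp, (Rabs_pos_eq E) in Hlip by lra.
    apply Rabs_le_between in Hlip; lra. }
  assert (L * E <= Rabs L * E) by (apply Rmult_le_compat_r; [lra|apply Rle_abs]).
  assert (beta * (Qu j s - Ql j s + E) = 0) by (rewrite HQ; ring).
  assert (0 <= alpha * (Wu j s - Wl j s + E)) by (apply Rmult_le_pos; lra).
  assert (0 <= alpha * (Wu (j - 1)%Z s - Wl (j - 1)%Z s + E)) by (apply Rmult_le_pos; lra).
  assert (0 < (lam - Rabs L - 2 * alpha + 2 * beta) * E)
    by (apply Rmult_lt_0_compat; [lra|exact HE]).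
  replace (eps * (lam * exp (lam * s))) with (lam * E) by (unfold E; ring).
  lra.
Qed.

Lemma gaps_pos_closed (s : R) : 0 < s <= T ->
  (forall t, 0 <= t < s -> gaps_pos eps lam t) -> gaps_pos eps lam s.
Proof.
  intros Hs Hbefore.
  apply gaps_pos_of_interior; [exact eps_pos|exact (proj1 Hs)|].
  intros j Hj.
  pose proof (gaps_pos_at_left eps lam s j (proj1 Hs) Hbefore Hj) as Hleft.
  pose proof (fun i => gaps_nonneg_of_before eps lam s i eps_pos (proj1 Hs) Hbefore) as Hnonneg.
  destruct (Hnonneg j ltac:(lra)) as [HW HQ].
  split.
  - destruct (Req_dec (DW j s) 0) as [H0|H0]; [exfalso|lra].
    pose proof (derive_nonpos_of_at_left_pos _ _ _
                  (C1_on_nonneg_is_derive_gap _ _ eps lam _ (Wu_C1 j) (Wl_C1 j) (proj1 Hs))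
                  (filter_imp _ _ (fun t H => proj1 H) Hleft) H0).
    pose proof (gapW_derive_pos j s (proj1 Hs) Hj H0 HQ
                  (proj2 (Hnonneg (j + 1)%Z ltac:(rewrite plus_IZR; lra)))).
    lra.
  - destruct (Req_dec (DQ j s) 0) as [H0|H0]; [exfalso|lra].
    pose proof (derive_nonpos_of_at_left_pos _ _ _
                  (C1_on_nonneg_is_derive_gap _ _ eps lam _ (Qu_C1 j) (Ql_C1 j) (proj1 Hs))
                  (filter_imp _ _ (fun t H => proj2 H) Hleft) H0).
    pose proof (gapQ_derive_pos j s Hs Hj H0 HW
                  (proj1 (Hnonneg (j - 1)%Z ltac:(rewrite minus_IZR; lra)))).
    lra.
Qed.

Lemma gaps_pos_open (s : R) : 0 <= s < T -> gaps_pos eps lam s ->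
  exists d, 0 < d /\ forall t, s < t < s + d -> t <= T -> gaps_pos eps lam t.
Proof.
  intros Hs HPs.
  destruct (index_range_bounded T ltac:(lra)) as [N HN].
  assert (Hev : forall j : Z, (- N <= j <= N)%Z -> within nonneg_half (locally s)
            (fun t => zeta t <= IZR j <= xi t -> 0 < DW j t /\ 0 < DQ j t)).
  { intros j _.
    destruct (Rlt_le_dec (zeta s - 1) (IZR j)) as [Hlo|Hlo];
      [destruct (Rlt_le_dec (IZR j) (xi s + 1)) as [Hhi|Hhi]|].
    - destruct (HPs j ltac:(lra)) as [HW HQ].
      apply (filter_imp (fun t => 0 < DW j t /\ 0 < DQ j t)); [auto|].
      apply filter_and.
      + exact (cont_nonneg_gap _ _ _ _ (C1_on_nonneg_cont _ (Wu_C1 j))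
                 (C1_on_nonneg_cont _ (Wl_C1 j)) s (proj1 Hs) _ (open_gt 0 _ HW)).
      + exact (cont_nonneg_gap _ _ _ _ (C1_on_nonneg_cont _ (Qu_C1 j))
                 (C1_on_nonneg_cont _ (Ql_C1 j)) s (proj1 Hs) _ (open_gt 0 _ HQ)).
    - refine (filter_imp _ _ _ (window_near s (proj1 Hs))); intros t [_ Hx] Hj; lra.
    - refine (filter_imp _ _ _ (window_near s (proj1 Hs))); intros t [Hz _] Hj; lra. }
  destruct (filter_forall_Zrange _ _ _ _ Hev) as [d Hd].
  exists d; split; [apply cond_pos|].
  intros t Ht HtT.
  apply gaps_pos_of_interior; [exact eps_pos|lra|].
  intros j Hj; apply (Hd t).
  - change (Rabs (t - s) < d); rewrite Rabs_pos_eq; lra.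
  - unfold nonneg_half; lra.
  - apply (HN t); lra.
  - exact Hj.
Qed.

Lemma gaps_pos_upto : 0 <= T -> forall t, 0 <= t <= T -> gaps_pos eps lam t.
Proof.
  intros HT; apply real_induction;
    [exact HT|exact (gaps_pos_init _ _ eps_pos)|exact gaps_pos_closed|exact gaps_pos_open].
Qed.

End Perturbation.

Lemma comparison_principle (t : R) (j : Z) : 0 < t -> zeta t <= IZR j <= xi t ->
  Wl j t <= Wu j t /\ Ql j t <= Qu j t.
Proof.
  intros Ht Hj.
  destruct (Q_bounded t (Rlt_le _ _ Ht)) as [M HM].
  destruct (f_loc_lip (- M) M) as [L HL].
  set (lam := Rabs L + 2 * alpha + 2 * beta + 1).
  assert (Hgaps : forall eps, 0 < eps -> gaps_pos eps lam t).
  { intros eps Heps.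
    apply (gaps_pos_upto t M L); auto; unfold lam; lra. }
  split; apply (Rle_of_forall_pos_perturbation _ _ (exp (lam * t)) (exp_pos _));
    intros eps Heps; apply (Hgaps eps Heps j); lra.
Qed.

End Comparison.

Theorem propositionB7
  (alpha beta : R) (f : R -> R) (zeta xi : R -> R)
  (Wl Ql Wu Qu : Z -> R -> R) :
  0 < alpha -> 0 < beta -> KPP_f f ->
  cont_nonneg zeta -> cont_nonneg xi ->
  (forall j, C1_on nonneg_half (Wl j)) -> (forall j, C1_on nonneg_half (Ql j)) ->
  (forall j, C1_on nonneg_half (Wu j)) -> (forall j, C1_on nonneg_half (Qu j)) ->
  (* supersolution *)
  (forall t (j : Z), 0 < t -> zeta t <= IZR j <= xi t ->
     Derive (Wu j) t >= - 2 * alpha * Wu j t + beta * (Qu j t + Qu (j + 1)%Z t) /\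
     Derive (Qu j) t >= f (Qu j t) + alpha * (Wu j t + Wu (j - 1)%Z t)
                         - 2 * beta * Qu j t) ->
  (* subsolution *)
  (forall t (j : Z), 0 < t -> zeta t <= IZR j <= xi t ->
     Derive (Wl j) t <= - 2 * alpha * Wl j t + beta * (Ql j t + Ql (j + 1)%Z t) /\
     Derive (Ql j) t <= f (Ql j t) + alpha * (Wl j t + Wl (j - 1)%Z t)
                         - 2 * beta * Ql j t) ->
  (* initial ordering *)
  (forall j : Z, zeta 0 - 1 <= IZR j <= xi 0 + 1 ->
     Wl j 0 <= Wu j 0 /\ Ql j 0 <= Qu j 0) ->
  (* boundary ordering *)
  (forall t (j : Z), 0 < t ->
     (zeta t - 1 <= IZR j < zeta t \/ xi t < IZR j <= xi t + 1) ->
     Wl j t <= Wu j t /\ Ql j t <= Qu j t) ->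
  forall t (j : Z), 0 < t -> zeta t <= IZR j <= xi t ->
    Wl j t <= Wu j t /\ Ql j t <= Qu j t.
Proof.
  intros Ha Hb Hf Hz Hx HWl HQl HWu HQu Hsup Hsub Hinit Hlayer.
  destruct Hf as (_ & _ & _ & _ & Hlip & _).
  exact (comparison_principle alpha beta f zeta xi Wl Ql Wu Qu (Rlt_le _ _ Ha) (Rlt_le _ _ Hb)
           Hlip Hz Hx HWl HQl HWu HQu Hsup Hsub Hinit Hlayer).
Qed.
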